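(* Let $G=(V,E)$ be a directed graph with real edge weights and no cycle of negative or zero weight, and let $x_1,y_1,x_2,y_2\in V$. Then $$F_{\mathrm{disj}}(x_1,y_1,x_2,y_2)=F(x_1,y_1)F(x_2,y_2)-\sum_{v\in V\setminus(\{x_1,y_1\}\cap\{x_2,y_2\})}D_v(x_1,y_1,x_2,y_2).$$
   Context: Introduce an indeterminate $z_e$ per edge; polynomials have coefficients in a field of characteristic two. For a simple path $P$, $f(P)$ is the product of $z_e$ over its edges ($1$ for a single vertex). $\Pi(x,y)$ is the set of shortest $x$–$y$ paths and $F(x,y)=\sum_{P\in\Pi(x,y)}f(P)$. Paths from $x_1$ to $y_1$ and from $x_2$ to $y_2$ are internally vertex-disjoint if they share no vertex outside $\{x_1,y_1\}\cap\{x_2,y_2\}$. $P[x,y]$ denotes the subpath from $x$ to $y$. $F_{\mathrm{disj}}(x_1,y_1,x_2,y_2)=\sum f(P_1)f(P_2)$ over internally vertex-disjoint pairs $(P_1,P_2)\in\Pi(x_1,y_1)\times\Pi(x_2,y_2)$. $D_v(x_1,y_1,x_2,y_2)=\sum f(P_1)f(P_2)$ over pairs $(P_1,P_2)\in\Pi(x_1,y_1)\times\Pi(x_2,y_2)$ such that $v\in V(P_1)\cap V(P_2)$ and $P_1[x_1,v]$ is internally vertex-disjoint both from $P_2[x_2,v]$ and from $P_2[v,y_2]$. *)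

From HB Require Import structures.
From mathcomp Require Import all_boot all_order all_algebra.
From mathcomp Require Import mpoly.
Set Implicit Arguments. Unset Strict Implicit. Unset Printing Implicit Defensive.
Import Order.TTheory GRing.Theory Num.Theory.
Local Open Scope ring_scope.

(* A path (or walk) is
   represented by its non-empty sequence of vertices. *)

Section Graph.
Variables (V : finType) (R : realFieldType) (e : rel V) (w : V -> V -> R).

Definition arcs (p : seq V) : seq (V * V) := zip p (behead p).

Definition pweight (p : seq V) : R := \sum_(a <- arcs p) w a.1 a.2.

Definition spath (x y : V) (p : seq V) : bool :=
  [&& head x p == x, last x p == y, p != [::], path e x (behead p) & uniq p].

(* all vertex sequences of length at most #|V|; they contain every simple path *)
Definition allseq : seq (seq V) :=
  flatten [seq [seq tval t | t : k.-tuple V] | k <- iota 0 #|V|.+1].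

Definition shortest (x y : V) (p : seq V) : bool :=
  spath x y p && all (fun q => spath x y q ==> (pweight p <= pweight q)) allseq.

Definition Pi (x y : V) : seq (seq V) := [seq p <- allseq | shortest x y p].

Definition cweight (c : seq V) : R := \sum_(a <- zip c (rot 1 c)) w a.1 a.2.

Definition no_nonpos_cycle : Prop :=
  forall c : seq V, c != [::] -> uniq c -> cycle e c -> 0 < cweight c.

Definition int_disj (x1 y1 x2 y2 : V) (P1 P2 : seq V) : bool :=
  all (fun v => (v \in P2) ==> (v \in [set x1; y1] :&: [set x2; y2])) P1.

Definition subpath_to (P : seq V) (v : V) : seq V := take (index v P).+1 P.
Definition subpath_from (P : seq V) (v : V) : seq V := drop (index v P) P.

Variable (F : fieldType).
Local Notation N := #|{: V * V}|.

Definition zvar (u v : V) : {mpoly F[N]} := 'X_(enum_rank (u, v)).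

Definition fP (P : seq V) : {mpoly F[N]} := \prod_(a <- arcs P) zvar a.1 a.2.

Definition Fsum (x y : V) : {mpoly F[N]} := \sum_(P <- Pi x y) fP P.

Definition Fdisj (x1 y1 x2 y2 : V) : {mpoly F[N]} :=
  \sum_(P1 <- Pi x1 y1) \sum_(P2 <- Pi x2 y2 | int_disj x1 y1 x2 y2 P1 P2)
     fP P1 * fP P2.

Definition Dv (v x1 y1 x2 y2 : V) : {mpoly F[N]} :=
  \sum_(P1 <- Pi x1 y1) \sum_(P2 <- Pi x2 y2 |
        [&& v \in P1, v \in P2,
            int_disj x1 v x2 v (subpath_to P1 v) (subpath_to P2 v) &
            int_disj x1 v v y2 (subpath_to P1 v) (subpath_from P2 v)])
     fP P1 * fP P2.

End Graph.

(* A pair (P1, P2) is counted in D_v exactly when v is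
   the first vertex of P1 lying on P2 outside {x1,y1} ∩ {x2,y2}: the common
   vertices before it can only be x1 = x2 (met before v on P2) or x1 = y2 (met
   after v).  Such a v exists precisely when the pair is not internally
   disjoint, so the D_v partition the non-disjoint pairs. *)

From HB Require Import structures.
From mathcomp Require Import all_boot all_order all_algebra.
From mathcomp Require Import mpoly.
Set Implicit Arguments. Unset Strict Implicit. Unset Printing Implicit Defensive.
Import Order.TTheory GRing.Theory Num.Theory.
Local Open Scope ring_scope.

Lemma in_drop_uniq (T : eqType) (s : seq T) (x : T) (i : nat) :
  uniq s -> x \in s -> (x \in drop i s) = (i <= index x s)%N.
Proof.
move=> s_uniq xs; rewrite leqNgt -(in_take i xs).
move: s_uniq xs; rewrite -{1 2}(cat_take_drop i s) cat_uniq mem_cat.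
case/and3P=> _ disj _; case: (boolP (x \in take i s)) => //= xt _.
by apply: contraNF disj => xd; apply/hasP; exists x.
Qed.

Lemma index_eq_find (T : eqType) (p : pred T) (s : seq T) (v : T) : v \in s ->
  (index v s == find p s) = p v && ~~ has p (take (index v s) s).
Proof.
move=> vs; have iv : (index v s < size s)%N by rewrite index_mem.
rewrite -[in find p s](cat_take_drop (index v s) s) (drop_nth v iv) nth_index //.
rewrite find_cat size_take iv /=.
case: (boolP (has p _)) => [hp | _]; last first.
  by case: (p v); rewrite ?addn0 ?eqxx // -{1}[index v s]addn0 eqn_add2l.
rewrite andbF gtn_eqF //; apply: leq_trans (_ : size (take (index v s) s) <= _)%N.
  by rewrite -has_find.
by rewrite size_take iv.
Qed.

Lemma card_index_eq_find (T : finType) (p : pred T) (s : seq T) : uniq s ->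
  #|[set v | (v \in s) && (index v s == find p s)]| = has p s.
Proof.
move=> s_uniq; case: (boolP (has p s)) => [hp | hNp].
  have [v0 _ _] := hasP hp.
  have lt_find : (find p s < size s)%N by rewrite -has_find.
  suff -> : [set v | (v \in s) && (index v s == find p s)] = [set nth v0 s (find p s)].
    by rewrite cards1.
  apply/setP => v.
  rewrite !inE; apply/andP/eqP => [[vs /eqP <-] | ->]; first by rewrite nth_index.
  by rewrite mem_nth // index_uniq.
apply: eq_card0 => v; rewrite !inE (hasNfind hNp).
by case vs: (v \in s); rewrite //= ltn_eqF // index_mem.
Qed.

Lemma subpath_to_rcons (T : finType) (s : seq T) (v : T) :
  v \in s -> subpath_to s v = rcons (take (index v s) s) v.
Proof. by move=> vs; rewrite /subpath_to (take_nth v) ?index_mem // nth_index. Qed.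

Lemma index_le_last (T : eqType) (x : T) (t : seq T) (v : T) :
  uniq (x :: t) -> v \in x :: t -> (index v (x :: t) <= index (last x t) (x :: t))%N.
Proof.
move=> xt_uniq vxt; rewrite index_last //.
by rewrite -ltnS -[(size t).+1]/(size (x :: t)) index_mem.
Qed.

Definition first_meet (V : finType) (x1 x2 y2 v : V) (P1 P2 : seq V) : bool :=
  [&& v \in P1, v \in P2,
      int_disj x1 v x2 v (subpath_to P1 v) (subpath_to P2 v) &
      int_disj x1 v v y2 (subpath_to P1 v) (subpath_from P2 v)].

Section FirstMeet.
Variables (V : finType) (x1 y1 x2 y2 : V) (t1 t2 : seq V).
Hypotheses (uniq1 : uniq (x1 :: t1)) (last1 : last x1 t1 = y1).
Hypotheses (uniq2 : uniq (x2 :: t2)) (last2 : last x2 t2 = y2).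
Local Notation P1 := (x1 :: t1).
Local Notation P2 := (x2 :: t2).
Local Notation S := ([set x1; y1] :&: [set x2; y2]).

Lemma first_meet_vertexE (u v : V) : v \in P2 -> u != v -> u != y1 ->
  ((u \in subpath_to P2 v) ==> (u \in [set x1; v] :&: [set x2; v])) &&
  ((u \in subpath_from P2 v) ==> (u \in [set x1; v] :&: [set v; y2]))
  = (u \in P2) ==> (u \in S).
Proof.
move=> vP2 neq_uv neq_uy1.
case: (boolP (u \in P2)) => uP2; last first.
  by rewrite !(contraNF (@mem_take _ _ _ _) uP2) !(contraNF (@mem_drop _ _ _ _) uP2).
rewrite /subpath_to /subpath_from in_take // in_drop_uniq // ltnS.
rewrite !inE (negbTE neq_uv) (negbTE neq_uy1) !orbF.
case: ltngtP => [lt_uv | lt_vu | eq_uv] /=.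
- suff /negbTE -> : u != y2 by rewrite orbF andbT.
  by apply: contraTneq lt_uv => ->; rewrite -leqNgt -last2 index_le_last.
- suff /negbTE -> : u != x2 by [].
  by apply: contraTneq lt_vu => ->; rewrite /= eqxx.
- by move: neq_uv; rewrite -(nth_index x1 uP2) eq_uv nth_index ?eqxx.
Qed.

Lemma first_meetE (v : V) : first_meet x1 x2 y2 v P1 P2 =
  [&& v \in P1, v \in P2 & int_disj x1 y1 x2 y2 (take (index v P1) P1) P2].
Proof.
rewrite /first_meet; case vP1: (v \in P1) => //; case vP2: (v \in P2) => //.
rewrite /int_disj (subpath_to_rcons vP1) !all_rcons !inE !eqxx !orbT !implybT !andTb.
rewrite -all_predI; apply: eq_in_all => u ut; have uP1 := mem_take ut.
move: ut; rewrite in_take // => lt_uv; apply: first_meet_vertexE; rewrite ?vP2 //.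
  by apply: contraTneq lt_uv => ->; rewrite ltnn.
by apply: contraTneq lt_uv => ->; rewrite -leqNgt -last1 index_le_last ?vP1.
Qed.

Lemma card_first_meet :
  #|[set v in ~: S | first_meet x1 x2 y2 v P1 P2]| = ~~ int_disj x1 y1 x2 y2 P1 P2.
Proof.
pose a u := (u \in P2) ==> (u \in S).
rewrite /int_disj -has_predC -(card_index_eq_find (predC a) uniq1).
apply: eq_card => v; rewrite in_set in_setC first_meetE in_set.
case vP1: (v \in P1); last by rewrite /= andbF.
rewrite index_eq_find // has_predC negbK /= negb_imply.
by case: (v \in P2); case: (v \in S).
Qed.

End FirstMeet.

Lemma mem_Pi_cons (V : finType) (R : realFieldType) (e : rel V) (w : V -> V -> R)
    (x y : V) (P : seq V) :
  P \in Pi e w x y -> exists2 t, P = x :: t & uniq (x :: t) /\ last x t = y.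
Proof.
rewrite mem_filter => /andP[/andP[/and5P[head_x last_y P_nil _ P_uniq] _] _].
by case: P head_x last_y P_nil P_uniq => [|a t] // /eqP /= -> /eqP last_y _; exists t.
Qed.

Lemma sum_Dv (V : finType) (R : realFieldType) (e : rel V) (w : V -> V -> R)
    (F : fieldType) (x1 y1 x2 y2 : V) :
  \sum_(v in ~: ([set x1; y1] :&: [set x2; y2])) Dv e w F v x1 y1 x2 y2 =
  \sum_(P1 <- Pi e w x1 y1) \sum_(P2 <- Pi e w x2 y2)
     fP F P1 * fP F P2 *+
       #|[set v in ~: ([set x1; y1] :&: [set x2; y2]) | first_meet x1 x2 y2 v P1 P2]|.
Proof.
rewrite /Dv; under eq_bigr do under eq_bigr do rewrite big_mkcond.
rewrite exchange_big /=; apply: eq_bigr => P1 _.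
rewrite exchange_big /=; apply: eq_bigr => P2 _.
by rewrite -big_mkcondr -sumr_const; apply: eq_bigl => v; rewrite in_set.
Qed.

Theorem lemma9 (V : finType) (R : realFieldType) (e : rel V) (w : V -> V -> R)
  (F : fieldType) (char2 : 2%N \in [pchar F])
  (hcyc : no_nonpos_cycle e w) (x1 y1 x2 y2 : V) :
  Fdisj e w F x1 y1 x2 y2 =
    Fsum e w F x1 y1 * Fsum e w F x2 y2
    - \sum_(v in ~: ([set x1; y1] :&: [set x2; y2])) Dv e w F v x1 y1 x2 y2.
Proof.
apply/eqP; rewrite eq_sym subr_eq; apply/eqP.
rewrite sum_Dv /Fdisj /Fsum big_distrl /= -big_split /=.
apply: eq_big_seq => P1 P1_Pi.
rewrite big_distrr /= (big_mkcond (int_disj _ _ _ _ _)) -big_split /=.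
apply: eq_big_seq => P2 P2_Pi.
have [t1 -> [uniq1 last1]] := mem_Pi_cons P1_Pi.
have [t2 -> [uniq2 last2]] := mem_Pi_cons P2_Pi.
by rewrite card_first_meet //; case: int_disj; rewrite ?addr0 ?add0r.
Qed.
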